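(* Let $G\in\mathcal{F}$ with adjacency matrix $A$, and let $x,y$ be two distinct non-adjacent vertices of $G$. Let $S$ be the $2\times 2$ principal submatrix of $A^2-A-2I$ indexed by $x,y$, that is, $S=\begin{bmatrix} d_x-2 & d_{xy}\\ d_{xy} & d_y-2\end{bmatrix}$. Then $S$ is positive semi-definite, and $\det S=(d_x-2)(d_y-2)-d_{xy}^2\geq 0$.
   Context: Graphs are finite and simple; spectrum means adjacency spectrum. $\mathcal{F}$ denotes the set of connected graphs whose spectrum consists of exactly one eigenvalue $r>2$, exactly one eigenvalue $s<-1$, and all remaining eigenvalues (with multiplicity) equal to $2$ or $-1$. $d_v$ is the degree of $v$ and $d_{uv}$ is the number of common neighbors of $u$ and $v$. *)

From mathcomp Require Import all_boot all_order all_algebra.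
From mathcomp Require Import reals.
Set Implicit Arguments. Unset Strict Implicit. Unset Printing Implicit Defensive.
Import Order.TTheory GRing.Theory Num.Theory.
Local Open Scope ring_scope.

Definition simple_graph (n : nat) (e : rel 'I_n) : Prop :=
  symmetric e /\ irreflexive e.

Definition connected_graph (n : nat) (e : rel 'I_n) : Prop :=
  forall x y : 'I_n, connect e x y.

Definition adj_mx (R : ringType) (n : nat) (e : rel 'I_n) : 'M[R]_n :=
  \matrix_(i, j) (e i j)%:R.

Definition deg (n : nat) (e : rel 'I_n) (v : 'I_n) : nat := #|[set u | e v u]|.
Definition codeg (n : nat) (e : rel 'I_n) (u v : 'I_n) : nat :=
  #|[set w | e u w && e v w]|.

(* The class F: connected graph whose adjacency spectrum (with multiplicity)
   is {r, s, 2^a, (-1)^b} with r > 2 and s < -1, i.e. the characteristic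
   polynomial is (X - r)(X - s)(X - 2)^a (X + 1)^b. *)
Definition in_F (R : realType) (n : nat) (e : rel 'I_n) : Prop :=
  simple_graph e /\ connected_graph e /\
  exists (r s : R) (a b : nat),
    2 < r /\ s < -1 /\
    char_poly (adj_mx R e) =
      ('X - r%:P) * ('X - s%:P) * ('X - 2%:P) ^+ a * ('X + 1) ^+ b.

Definition princ2 (R : ringType) (n : nat) (M : 'M[R]_n) (x y : 'I_n) : 'M[R]_2 :=
  \matrix_(i, j) M (if i == 0 then x else y) (if j == 0 then x else y).

Definition psd (R : realType) (m : nat) (S : 'M[R]_m) : Prop :=
  S^T = S /\ forall v : 'cV[R]_m, 0 <= (v^T *m S *m v) 0 0.

From mathcomp Require Import all_boot all_order all_algebra.
From mathcomp Require Import reals.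
From mathcomp Require Import ring lra.
Set Implicit Arguments. Unset Strict Implicit. Unset Printing Implicit Defensive.
Import Order.TTheory GRing.Theory Num.Theory.
Local Open Scope ring_scope.

(* M = A^2 - A - 2I = (A - 2I)(A + I) is positive semidefinite, since A is
   symmetric with spectrum in {r, s, 2, -1} and (r - 2)(r + 1), (s - 2)(s + 1)
   are positive.  Avoiding the spectral theorem: a symmetric nilpotent matrix
   vanishes, so the squarefree polynomial (X - r)(X - s)(X - 2)(X + 1) already
   annihilates A; then M is a nonnegative combination of the two spectral
   projections for r and s, which are Gram matrices.  Principal submatrices of
   a PSD matrix are PSD, a PSD 2x2 matrix has nonnegative determinant, and the
   entries are read off from (A^2)_uv = d_uv. *)

Section HornerMx.
Variable R : comNzRingType.

Lemma trmxX n (B : 'M[R]_n.+1) k : (B ^+ k)^T = B^T ^+ k.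
Proof.
elim: k => [|k IHk]; first by rewrite !expr0 trmx1.
by rewrite exprS trmx_mul IHk mulmxE -exprSr.
Qed.

Lemma horner_mx_sym n (A : 'M[R]_n.+1) p :
  A^T = A -> (horner_mx A p)^T = horner_mx A p.
Proof.
move=> sA; elim/poly_ind: p => [|p c IHp]; first by rewrite rmorph0 trmx0.
rewrite rmorphD rmorphM /= horner_mx_X horner_mx_C linearD /= trmx_mul IHp sA.
by rewrite tr_scalar_mx (comm_mx_horner p (comm_mx_refl A)).
Qed.

Lemma horner_mx_idem n (A : 'M[R]_n.+1) (G : {poly R}) r s :
  horner_mx A (('X - r%:P) * ('X - s%:P) * G) = 0 ->
  let B := horner_mx A (('X - s%:P) * G) in
  B *m B = ((r - s) * G.[r]) *: B.
Proof.
move=> qA0 B; set c := (r - s) * G.[r].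
have /factor_theorem [H defH] : root (('X - s%:P) * G - c%:P) r.
  by rewrite /root !hornerE subrr.
have : ('X - s%:P) * G * (('X - s%:P) * G - c%:P) =
       H * (('X - r%:P) * ('X - s%:P) * G).
  by rewrite defH; ring.
move/(congr1 (horner_mx A)); rewrite [RHS]rmorphM /= qA0 mulr0.
rewrite rmorphM rmorphB /= horner_mx_C -/B mulrBr -mulmxE mul_mx_scalar.
by move/subr0_eq.
Qed.

End HornerMx.

Section RealSymmetric.
Variable R : realFieldType.

Lemma trmx_mul_self_eq0 m n (C : 'M[R]_(m, n)) : C^T *m C = 0 -> C = 0.
Proof.
move=> CC0; apply/matrixP => i j.
have sq0 : \sum_k C k j ^+ 2 = (C^T *m C) j j.
  by rewrite mxE; apply: eq_bigr => k _; rewrite mxE expr2.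
rewrite CC0 mxE in sq0.
have /eqP := psumr_eq0P (fun k _ => sqr_ge0 (C k j)) sq0 (i := i) isT.
by rewrite sqrf_eq0 mxE => /eqP.
Qed.

Lemma sym_nilpotent_eq0 n (B : 'M[R]_n.+1) k :
  B^T = B -> B ^+ k.+1 = 0 -> B = 0.
Proof.
move=> sB; elim: k => [|k IHk Bk0]; first by rewrite expr1.
apply: IHk; apply: trmx_mul_self_eq0.
by rewrite trmxX sB mulmxE -exprD addSnnS exprD Bk0 mulr0.
Qed.

Lemma sym_horner_mx_eq0 n (A : 'M[R]_n.+1) q k :
  A^T = A -> char_poly A %| q ^+ k.+1 -> horner_mx A q = 0.
Proof.
move=> sA /divpK dvd; apply: (@sym_nilpotent_eq0 _ _ k).
  exact: horner_mx_sym.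
by rewrite -rmorphXn /= -dvd rmorphM /= Cayley_Hamilton mulr0.
Qed.

End RealSymmetric.

Lemma dvdp_mul_exp_squarefree (R : idomainType) (p1 p2 p3 p4 : {poly R}) a b :
  p1 * p2 * p3 ^+ a * p4 ^+ b %| (p1 * p2 * p3 * p4) ^+ (a + b).+1.
Proof.
have dvd_pow p : p %| p ^+ (a + b).+1 by apply: dvdp_exp.
rewrite !exprMn; apply: dvdp_mul; first apply: dvdp_mul; first apply: dvdp_mul.
- exact: dvd_pow.
- exact: dvd_pow.
- by apply: dvdp_exp2l; rewrite -addnS leq_addr.
- by apply: dvdp_exp2l; rewrite -addSn leq_addl.
Qed.

Lemma det_mx22 (R : comNzRingType) (S : 'M[R]_2) :
  \det S = S 0 0 * S 1 1 - S 0 1 * S 1 0.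
Proof.
rewrite (expand_det_row _ ord0) !big_ord_recr big_ord0 /= /cofactor.
rewrite !det_mx11 !mxE /=.
rewrite add0r expr0 expr1 mul1r mulN1r mulrN.
by congr (_ * _ - _ * _); congr (S _ _); apply: val_inj.
Qed.

Section PositiveSemidefinite.
Variable R : realType.

Lemma psd_gram m n (B : 'M[R]_(m, n)) : psd (B^T *m B).
Proof.
split; first by rewrite trmx_mul trmxK.
move=> v; have -> : v^T *m (B^T *m B) *m v = (B *m v)^T *m (B *m v).
  by rewrite trmx_mul !mulmxA.
by rewrite mxE; apply: sumr_ge0 => i _; rewrite mxE -expr2 sqr_ge0.
Qed.

Lemma psdD n (S T : 'M[R]_n) : psd S -> psd T -> psd (S + T).
Proof.
move=> [sS S0] [sT T0]; split; first by rewrite linearD /= sS sT.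
by move=> v; rewrite mulmxDr mulmxDl mxE addr_ge0.
Qed.

Lemma psdZ n k (S : 'M[R]_n) : 0 <= k -> psd S -> psd (k *: S).
Proof.
move=> k0 [sS S0]; split; first by rewrite linearZ /= sS.
by move=> v; rewrite -scalemxAr -scalemxAl mxE mulr_ge0.
Qed.

Lemma psd_congr m n (P : 'M[R]_(m, n)) (S : 'M[R]_m) :
  psd S -> psd (P^T *m S *m P).
Proof.
move=> [sS S0]; split; first by rewrite !trmx_mul trmxK sS mulmxA.
move=> v; have -> : v^T *m (P^T *m S *m P) *m v = (P *m v)^T *m S *m (P *m v).
  by rewrite trmx_mul !mulmxA.
exact: S0.
Qed.

Lemma psd_idem_scale n (B : 'M[R]_n) k :
  B^T = B -> B *m B = k *: B -> psd (k^-1 *: B).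
Proof.
move=> sB BB; suff -> : k^-1 *: B = (k^-1 *: B)^T *m (k^-1 *: B) by apply: psd_gram.
rewrite [(k^-1 *: B)^T]linearZ /= sB -scalemxAl -scalemxAr BB !scalerA.
have [->|k0] := eqVneq k 0; first by rewrite invr0 !mul0r.
by rewrite -mulrA mulVf ?mulr1.
Qed.

Lemma psd_horner_mx n (A : 'M[R]_n.+1) (G : {poly R}) r s :
  A^T = A -> r != s -> 0 < G.[r] -> 0 < G.[s] ->
  horner_mx A (('X - r%:P) * ('X - s%:P) * G) = 0 -> psd (horner_mx A G).
Proof.
move=> sA rs Gr Gs qA0.
have qA0' : horner_mx A (('X - s%:P) * ('X - r%:P) * G) = 0.
  by rewrite [_ * ('X - r%:P)]mulrC.
have psd_r := psd_idem_scale (horner_mx_sym _ sA) (horner_mx_idem qA0).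
have psd_s := psd_idem_scale (horner_mx_sym _ sA) (horner_mx_idem qA0').
set Er := horner_mx A (_ * G) in psd_r; set Es := horner_mx A (_ * G) in psd_s.
have diffE : (r - s) *: horner_mx A G = Er - Es.
  rewrite -mul_scalar_mx -(horner_mx_C A) mulmxE -rmorphM -rmorphB /=.
  by congr (horner_mx A _); rewrite polyCB; ring.
(* The two scaled matrices are the spectral projections for r and s. *)
suff -> : horner_mx A G =
    G.[r] *: (((r - s) * G.[r])^-1 *: Er) + G.[s] *: (((s - r) * G.[s])^-1 *: Es).
  by apply: psdD; apply: psdZ; rewrite ?ltW.
have rs0 : r - s != 0 by rewrite subr_eq0.
have sr0 : s - r != 0 by rewrite subr_eq0 eq_sym.
rewrite !scalerA !invfM !mulrA ![_ / (_ - _) / _]mulrAC !mulfV ?lt0r_neq0 //.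
rewrite !mul1r -[s - r]opprB invrN.
by rewrite scaleNr -scalerBr -diffE scalerA mulVf ?scale1r.
Qed.

Lemma psd_princ2 n (M : 'M[R]_n) x y : psd M -> psd (princ2 M x y).
Proof.
pose g (i : 'I_2) := if i == 0 then x else y.
suff -> : princ2 M x y = (colsub g 1%:M)^T *m M *m colsub g 1%:M by apply: psd_congr.
rewrite trmx_mxsub trmx1 -mulmxA mulmx_colsub mulmx1 mul_rowsub_mx mul1mx.
by apply/matrixP => i j; rewrite !mxE.
Qed.

Lemma psd2_det_ge0 (S : 'M[R]_2) : psd S -> 0 <= \det S.
Proof.
move=> [sS S0]; rewrite det_mx22.
have S10 : S 1 0 = S 0 1 by rewrite -[in LHS]sS mxE.
have l1 : lift ord0 ord0 = 1 :> 'I_2 by apply: val_inj.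
set a := S 0 0; set b := S 0 1; set c := S 1 1.
have Q p q : 0 <= a * p ^+ 2 + 2 * b * p * q + c * q ^+ 2.
  have := S0 (\col_i (if i == 0 then p else q)).
  rewrite !mxE !big_ord_recl !big_ord0 /= !mxE !big_ord_recl !big_ord0 /=.
  rewrite !mxE l1 S10 /= -/a -/b -/c; lra.
rewrite S10 -/b.
(* [Q c (- b)] and [Q b (- a)] are [c * det S] and [a * det S]. *)
have := Q 1 0; have := Q 0 1; rewrite !expr0n !expr1n /= => c_ge0 a_ge0.
have [ac_gt0|ac_le0] := ltrP 0 (a + c).
  by rewrite -(pmulr_rge0 _ ac_gt0); move: (Q c (- b)) (Q b (- a)); lra.
have a0 : a = 0 by lra.
have c0 : c = 0 by lra.
have b0 : b = 0 by move: (Q 1 1) (Q 1 (- 1)); rewrite a0 c0; lra.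
by rewrite a0 b0 !mul0r subrr.
Qed.
End PositiveSemidefinite.

Lemma sumr_bool_card (R : pzSemiRingType) (T : finType) (P : pred T) :
  \sum_j ((P j)%:R : R) = #|[set j | P j]|%:R.
Proof.
rewrite -natr_sum -sum1_card [in RHS]big_mkcond /=.
by congr (_%:R); apply: eq_bigr => j _; rewrite inE; case: (P j).
Qed.

Section AdjacencyMatrix.
Variables (R : nzRingType) (n : nat) (e : rel 'I_n).

Lemma deg_codeg u : deg e u = codeg e u u.
Proof. by apply: eq_card => z; rewrite !inE andbb. Qed.

Lemma codegC u w : codeg e u w = codeg e w u.
Proof. by apply: eq_card => z; rewrite !inE andbC. Qed.

Lemma adj_mx_sqE : symmetric e ->
  adj_mx R e *m adj_mx R e = \matrix_(u, w) (codeg e u w)%:R.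
Proof.
move=> symE; apply/matrixP => u w; rewrite !mxE.
under eq_bigr => j _ do rewrite !mxE -natrM mulnb (symE j w).
exact: sumr_bool_card.
Qed.

Lemma princ2_adj_mx_sq_subE x y : simple_graph e -> x != y -> ~~ e x y ->
  let A := adj_mx R e in
  princ2 (A *m A - A - 2%:M) x y =
    \matrix_(i < 2, j < 2)
      (if i == j then (if i == 0 then (deg e x)%:R - 2 else (deg e y)%:R - 2)
       else (codeg e x y)%:R).
Proof.
move=> [symE irrE] xy nexy A; apply/matrixP => i j.
rewrite adj_mx_sqE // !mxE.
case: i => [[|[|//]] ?]; case: j => [[|[|//]] ?] /=.
- by rewrite irrE eqxx deg_codeg subr0.
- by rewrite (negbTE nexy) (negbTE xy) !subr0.
- by rewrite symE (negbTE nexy) eq_sym (negbTE xy) codegC !subr0.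
- by rewrite irrE eqxx deg_codeg subr0.
Qed.

End AdjacencyMatrix.

Theorem lemma4p2 (R : realType) (n : nat) (e : rel 'I_n) (x y : 'I_n) :
  in_F R e -> x != y -> ~~ e x y ->
  let A := adj_mx R e in
  let S := princ2 (A *m A - A - 2%:M) x y in
  S = \matrix_(i < 2, j < 2)
        (if i == j then (if i == 0 then (deg e x)%:R - 2 else (deg e y)%:R - 2)
         else (codeg e x y)%:R) /\
  psd S /\
  \det S = ((deg e x)%:R - 2) * ((deg e y)%:R - 2) - (codeg e x y)%:R ^+ 2 /\
  0 <= ((deg e x)%:R - 2) * ((deg e y)%:R - 2) - (codeg e x y)%:R ^+ 2 :> R.
Proof.
case: n e x y => [|n] e x y; first by case: x.
move=> [simpleE [_ [r [s [a [b [r_gt2 [s_ltN1 charA]]]]]]]] xy nexy A S.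
have SE : S = _ := princ2_adj_mx_sq_subE R simpleE xy nexy.
have sA : A^T = A by apply/matrixP => i j; rewrite !mxE simpleE.1.
pose F : {poly R} := ('X - 2%:P) * ('X + 1).
have FA : horner_mx A F = A *m A - A - 2%:M.
  have -> : F = 'X^2 - 'X - 2%:P by rewrite /F; ring.
  by rewrite !rmorphB rmorphXn /= horner_mx_X horner_mx_C expr2 mulmxE.
have qA0 : horner_mx A (('X - r%:P) * ('X - s%:P) * F) = 0.
  apply: (@sym_horner_mx_eq0 _ _ _ _ (a + b) sA).
  by rewrite charA /F !mulrA dvdp_mul_exp_squarefree.
have psdS : psd S.
  apply: psd_princ2; rewrite -FA; apply: psd_horner_mx qA0 => //.
  - by apply/eqP => rs; lra.
  - by rewrite /F !hornerE; nra.
  - by rewrite /F !hornerE; nra.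
have detS : \det S = ((deg e x)%:R - 2) * ((deg e y)%:R - 2) - (codeg e x y)%:R ^+ 2.
  by rewrite SE det_mx22 !mxE /= expr2.
by do !split => //; rewrite -detS psd2_det_ge0.
Qed.
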